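(* Let $P^\ast$ be an $n\times k$ minimal matrix representation of a $0/1$-polytope with $k$ vertices. Then for each $j\in\{1,\dots,k-1\}$, the submatrix $P_j^\ast$ of $P^\ast$ consisting of its $j$ leftmost columns is a minimal matrix representation of a $0/1$-polytope with $j$ vertices.
   Context: For $x\in\{0,1\}^n$ its column number is $v_n^\top x$ with $v_n^\top=(2^0,2^1,\dots,2^{n-1})$. For an $n\times m$ $0/1$-matrix $P$ with pairwise distinct columns, $\nu(P)$ is the vector of its column numbers sorted increasingly. $P$ is a minimal matrix representation (of the $0/1$-polytope whose vertices are its columns) if its column numbers $v_n^\top P$ are strictly increasing from left to right and $\nu(P)\preceq\nu(Q)$ in lexicographic order for every matrix $Q$ obtained from $P$ by complementing (exchanging $0\leftrightarrow1$) the entries of some subset of its rows and then permuting its rows. *)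

From mathcomp Require Import all_boot all_order all_fingroup all_algebra.
Set Implicit Arguments. Unset Strict Implicit. Unset Printing Implicit Defensive.

(* 0/1-matrices are boolean matrices: entry true = 1, false = 0. *)

(* column number v_n^T x = sum_i x_i 2^i (row i, 0-based, has weight 2^i) *)
Definition colnum (n m : nat) (P : 'M[bool]_(n, m)) (j : 'I_m) : nat :=
  \sum_(i < n) (P i j : nat) * 2 ^ i.

Definition colnums (n m : nat) (P : 'M[bool]_(n, m)) : seq nat :=
  [seq colnum P j | j <- enum 'I_m].

Definition nu (n m : nat) (P : 'M[bool]_(n, m)) : seq nat :=
  sort leq (colnums P).

Fixpoint lexle (s t : seq nat) : bool :=
  match s, t with
  | [::], _ => true
  | _ :: _, [::] => false
  | x :: s', y :: t' => (x < y) || ((x == y) && lexle s' t')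
  end.

Definition distinct_cols (n m : nat) (P : 'M[bool]_(n, m)) : bool :=
  [forall j1 : 'I_m, forall j2 : 'I_m, (j1 != j2) ==> (col j1 P != col j2 P)].

Definition flip_perm (n m : nat) (S : {set 'I_n}) (s : 'S_n)
    (P : 'M[bool]_(n, m)) : 'M[bool]_(n, m) :=
  \matrix_(i < n, j < m) (P (s i) j (+) (s i \in S)).

Definition minimal_rep (n m : nat) (P : 'M[bool]_(n, m)) : Prop :=
  [/\ distinct_cols P,
      (forall j1 j2 : 'I_m, j1 < j2 -> colnum P j1 < colnum P j2) &
      (forall (S : {set 'I_n}) (s : 'S_n), lexle (nu P) (nu (flip_perm S s P)))].

Definition leftcols (n m j : nat) (hj : j <= m) (P : 'M[bool]_(n, m))
  : 'M[bool]_(n, j) := colsub (widen_ord hj) P.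

From mathcomp Require Import all_boot all_order all_fingroup all_algebra.

Set Implicit Arguments.
Unset Strict Implicit.
Unset Printing Implicit Defensive.

(* Since the column numbers of a minimal representation increase, nu(P_j) is
   the prefix of length j of nu(P).  Complementing and permuting rows commutes
   with taking the j leftmost columns, so nu(Q_j) is the sorted list of the
   first j column numbers of Q; its t-th entry dominates the t-th entry of
   nu(Q), which sorts a superset.  Truncating nu(P) <=lex nu(Q) to length j
   and raising the right-hand side entrywise gives nu(P_j) <=lex nu(Q_j). *)

Lemma lexle_take (s t : seq nat) (j : nat) :
  lexle s t -> lexle (take j s) (take j t).
Proof.
elim: s t j => [|x s IH] [|y t] [|j] //= /orP[-> // | /andP[/eqP <- le_st]].
by rewrite ltnn eqxx IH.
Qed.

Lemma lexle_nth_leq (s t u : seq nat) :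
  lexle s t -> size t = size u ->
  (forall i, i < size t -> nth 0 t i <= nth 0 u i) -> lexle s u.
Proof.
elim: s t u => [|x s IH] [|y t] [|z u] //= le_st [size_tu] le_tu.
have le_yz : y <= z by exact: le_tu 0 isT.
case/orP: le_st => [lt_xy | /andP[/eqP -> le_st]].
  by rewrite (leq_trans lt_xy le_yz).
move: le_yz; rewrite leq_eqVlt => /orP[/eqP <- | ->] //.
rewrite ltnn eqxx /=; apply: IH le_st size_tu _ => i lt_it.
exact: le_tu i.+1 lt_it.
Qed.

Lemma sorted_nth_leq_count (d : seq nat) (v t : nat) :
  sorted leq d -> t < count (leq^~ v) d -> nth 0 d t <= v.
Proof.
elim: d t => [|x d IH] [|t] //= sorted_xd.
- apply: contraLR => /negbTE not_xv; rewrite not_xv add0n -has_count.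
  apply/hasPn => y d_y; apply: contraFN not_xv.
  by apply: leq_trans; move/allP: (order_path_min leq_trans sorted_xd); apply.
- move=> lt_t; apply: IH (path_sorted sorted_xd) _.
  by case: (x <= v) lt_t => //= /ltnW.
Qed.

Lemma sorted_nth_lt_count (e : seq nat) (t : nat) :
  sorted leq e -> t < size e -> t < count (leq^~ (nth 0 e t)) e.
Proof.
elim: e t => [|x e IH] [|t] //= sorted_xe lt_t; first by rewrite leqnn.
have le_x : x <= nth 0 e t.
  by move/allP: (order_path_min leq_trans sorted_xe); apply; exact: mem_nth.
by rewrite le_x add1n ltnS IH // (path_sorted sorted_xe).
Qed.

Lemma nth_sort_cat_leq (s1 s2 : seq nat) (t : nat) :
  t < size s1 -> nth 0 (sort leq (s1 ++ s2)) t <= nth 0 (sort leq s1) t.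
Proof.
move=> lt_t; apply: sorted_nth_leq_count; first exact: sort_sorted leq_total _.
rewrite count_sort count_cat -(count_sort leq); apply: leq_trans (leq_addr _ _).
by apply: sorted_nth_lt_count; rewrite ?size_sort // sort_sorted //; exact: leq_total.
Qed.

Lemma size_colnums (n m : nat) (P : 'M[bool]_(n, m)) : size (colnums P) = m.
Proof. by rewrite size_map size_enum_ord. Qed.

Lemma size_nu (n m : nat) (P : 'M[bool]_(n, m)) : size (nu P) = m.
Proof. by rewrite size_sort size_colnums. Qed.

Lemma sorted_colnums (n m : nat) (P : 'M[bool]_(n, m)) :
  (forall j1 j2 : 'I_m, j1 < j2 -> colnum P j1 < colnum P j2) ->
  sorted ltn (colnums P).
Proof.
move=> incr; rewrite sorted_map.
have : sorted (relpre val ltn) (enum 'I_m).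
  by rewrite -sorted_map val_enum_ord iota_ltn_sorted.
by apply: sub_sorted => a b; exact: incr.
Qed.

Section LeftColumns.

Variables (n m j : nat) (hj : j <= m).
Implicit Types (P : 'M[bool]_(n, m)).

Lemma col_leftcols P (a : 'I_j) : col a (leftcols hj P) = col (widen_ord hj a) P.
Proof. by apply/matrixP => x y; rewrite !mxE. Qed.

Lemma colnum_leftcols P (a : 'I_j) :
  colnum (leftcols hj P) a = colnum P (widen_ord hj a).
Proof. by apply: eq_bigr => i _; rewrite mxE. Qed.

Lemma colnums_leftcols P : colnums (leftcols hj P) = take j (colnums P).
Proof.
apply: (@eq_from_nth _ 0); first by rewrite size_takel !size_colnums.
move=> t; rewrite size_colnums => lt_tj; rewrite nth_take //.
pose a := Ordinal lt_tj; pose b := widen_ord hj a.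
rewrite -[t]/(nat_of_ord a) (nth_map a) ?size_enum_ord // nth_ord_enum.
by rewrite -[nat_of_ord a]/(nat_of_ord b) (nth_map b) ?size_enum_ord // nth_ord_enum colnum_leftcols.
Qed.

Lemma flip_perm_leftcols P (S : {set 'I_n}) (s : 'S_n) :
  flip_perm S s (leftcols hj P) = leftcols hj (flip_perm S s P).
Proof. by apply/matrixP => a b; rewrite !mxE. Qed.

Lemma distinct_cols_leftcols P : distinct_cols P -> distinct_cols (leftcols hj P).
Proof.
move=> /forallP dist; apply/forallP => a; apply/forallP => b; apply/implyP => neq_ab.
rewrite !col_leftcols; move/forallP: (dist (widen_ord hj a)) => /(_ (widen_ord hj b)).
by move/implyP; apply; apply: contraNneq neq_ab => /(congr1 val) eq_ab; apply/eqP/val_inj.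
Qed.

Lemma nu_leftcols_sorted P : sorted leq (colnums P) -> nu (leftcols hj P) = take j (nu P).
Proof.
move=> sorted_P; rewrite /nu colnums_leftcols.
by rewrite !sorted_sort ?take_sorted //; exact: leq_trans.
Qed.

Lemma nth_nu_leq_nu_leftcols P (t : nat) :
  t < j -> nth 0 (nu P) t <= nth 0 (nu (leftcols hj P)) t.
Proof.
move=> lt_tj; rewrite /nu colnums_leftcols -{1}(cat_take_drop j (colnums P)).
by apply: nth_sort_cat_leq; rewrite size_takel ?size_colnums.
Qed.

End LeftColumns.

Theorem lemma4p10 (n k : nat) (P : 'M[bool]_(n, k)) (j : nat)
    (hj1 : 0 < j) (hjk : j < k) :
  minimal_rep P -> minimal_rep (leftcols (ltnW hjk) P).
Proof.
case=> dist incr minP; split.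
- exact: distinct_cols_leftcols.
- by move=> a b lt_ab; rewrite !colnum_leftcols; apply: incr.
- move=> S s; rewrite flip_perm_leftcols nu_leftcols_sorted; last first.
    by move: (sorted_colnums incr); apply: sub_sorted => a b; exact: ltnW.
  apply: lexle_nth_leq (lexle_take j (minP S s)) _ _.
    by rewrite size_take !size_nu hjk.
  move=> t; rewrite size_take size_nu hjk => lt_tj.
  by rewrite nth_take //; exact: nth_nu_leq_nu_leftcols.
Qed.
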